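(* For any algebra $(A,e)$ of a weakly cartesian and strictly positive monad $T$ on $\mathsf{Set}$, the bar construction $\mathrm{Bar}(T,A)$ is both inner span complete and split.
   Context: A monad $(T,\eta,\mu)$ on $\mathsf{Set}$ is weakly cartesian if $T$ preserves weak pullbacks and every naturality square of $\eta$ and of $\mu$ is a weak pullback (a commutative square of sets with $f:A\to B$, $g:A\to C$, $m:B\to D$, $n:C\to D$ is a weak pullback if for all $b,c$ with $m(b)=n(c)$ there is $a$ with $f(a)=b$, $g(a)=c$). $T$ is strictly positive if for every set $X$, all $x\in X$ and $\tau\in TTX$, $\mu_X(\tau)=\eta_X(x)$ implies $\tau=\eta_{TX}\eta_X(x)$. The bar construction of a $T$-algebra $(A,e)$ is the simplicial set $X$ with $X_n=T^{n+1}A$, face maps $d_{n,0}=T^ne$ and $d_{n,i}=T^{n-i}\mu_{T^{i-1}A}$ for $1\le i\le n$, and degeneracies $s_{n,i}=T^{n-i+1}\eta_{T^iA}$ for $0\le i\le n$. A simplicial set $X$ is inner span complete if it sends every pushout square in $\Delta$ of two coface maps to a weak pullback in $\mathsf{Set}$ (known to be equivalent to: for $0\le i<j-1\le n-1$, the square $d_{j-1}d_i=d_id_j:X_n\to X_{n-2}$ is a weak pullback). $X$ is split if it sends all pushout squares in $\Delta$ of one coface map and one codegeneracy map to pullbacks in $\mathsf{Set}$; this is known to be equivalent to: for $0\le i<j\le n$ the square $s_{j-1}d_i=d_is_j$ is a pullback, for $0\le j<i\le n$ the square $s_jd_i=d_{i+1}s_j$ is a pullback, and for $0\le i\le n$ the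 square with $\mathrm{id}:X_n\to X_n$, $s_{i+1}s_i:X_n\to X_{n+2}$, $s_i:X_n\to X_{n+1}$, $d_{i+1}:X_{n+2}\to X_{n+1}$ is a pullback. *)

From Stdlib Require Import Arith.

(** A square   P --f--> B
               |g       |m
               v        v
               C --n--> D                                       *)

Definition is_weak_pullback (P B C D : Type)
  (f : P -> B) (g : P -> C) (m : B -> D) (n : C -> D) : Prop :=
  (forall a, m (f a) = n (g a)) /\
  (forall b c, m b = n c -> exists a, f a = b /\ g a = c).

Definition is_pullback (P B C D : Type)
  (f : P -> B) (g : P -> C) (m : B -> D) (n : C -> D) : Prop :=
  (forall a, m (f a) = n (g a)) /\
  (forall b c, m b = n c -> exists a, (f a = b /\ g a = c) /\
      forall a', f a' = b /\ g a' = c -> a' = a).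

Arguments is_weak_pullback {P B C D} f g m n.
Arguments is_pullback {P B C D} f g m n.

Record Monad := {
  M :> Type -> Type;
  fmap : forall X Y : Type, (X -> Y) -> M X -> M Y;
  eta : forall X : Type, X -> M X;
  mu : forall X : Type, M (M X) -> M X;
  fmap_id : forall X (t : M X), fmap X X (fun x => x) t = t;
  fmap_comp : forall X Y Z (f : X -> Y) (g : Y -> Z) (t : M X),
      fmap X Z (fun x => g (f x)) t = fmap Y Z g (fmap X Y f t);
  eta_nat : forall X Y (f : X -> Y) (x : X), eta Y (f x) = fmap X Y f (eta X x);
  mu_nat : forall X Y (f : X -> Y) (t : M (M X)),
      mu Y (fmap (M X) (M Y) (fmap X Y f) t) = fmap X Y f (mu X t);
  mu_eta_l : forall X (t : M X), mu X (eta (M X) t) = t;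
  mu_eta_r : forall X (t : M X), mu X (fmap X (M X) (eta X) t) = t;
  mu_assoc : forall X (t : M (M (M X))),
      mu X (fmap (M (M X)) (M X) (mu X) t) = mu X (mu (M X) t)
}.

Arguments fmap _ {X Y} f t.
Arguments eta _ {X} x.
Arguments mu _ {X} t.

Set Implicit Arguments.

Definition weakly_cartesian (T : Monad) : Prop :=
  (forall (P B C D : Type) (f : P -> B) (g : P -> C) (m : B -> D) (n : C -> D),
      is_weak_pullback f g m n ->
      is_weak_pullback (fmap T f) (fmap T g) (fmap T m) (fmap T n)) /\
  (forall (X Y : Type) (h : X -> Y),
      is_weak_pullback h (@eta T X) (@eta T Y) (fmap T h)) /\
  (forall (X Y : Type) (h : X -> Y),
      is_weak_pullback (fmap T (fmap T h)) (@mu T X) (@mu T Y) (fmap T h)).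

Definition strictly_positive (T : Monad) : Prop :=
  forall (X : Type) (x : X) (tau : T (T X)),
    mu T tau = eta T x -> tau = eta T (eta T x).

Definition is_algebra (T : Monad) (A : Type) (e : T A -> A) : Prop :=
  (forall a : A, e (eta T a) = a) /\
  (forall t : T (T A), e (fmap T e t) = e (mu T t)).

(** * (Semi-)simplicial data: X : nat -> Type,
    face m i : X (m+1) -> X m   (the face map d_{m+1,i}),
    degen m i : X m -> X (m+1)  (the degeneracy s_{m,i}). *)

(** Inner span completeness, in its index form: for 0 <= i < j-1 <= n-1
    the square d_{j-1} d_i = d_i d_j : X_n -> X_{n-2} is a weak pullback
    (here n = k+2). *)
Definition inner_span_complete (X : nat -> Type)
  (face : forall m : nat, nat -> X (S m) -> X m) : Prop :=
  forall k i j : nat, i + 1 < j -> j <= k + 2 ->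
    is_weak_pullback (face (S k) i) (face (S k) j) (face k (j - 1)) (face k i).

Definition split (X : nat -> Type)
  (face : forall m : nat, nat -> X (S m) -> X m)
  (degen : forall m : nat, nat -> X m -> X (S m)) : Prop :=
  (* 0 <= i < j <= n (n = k+1): s_{j-1} d_i = d_i s_j *)
  (forall k i j : nat, i < j -> j <= S k ->
     is_pullback (face k i) (degen (S k) j) (degen k (j - 1)) (face (S k) i)) /\
  (* 0 <= j < i <= n (n = k+1): s_j d_i = d_{i+1} s_j *)
  (forall k i j : nat, j < i -> i <= S k ->
     is_pullback (face k i) (degen (S k) j) (degen k j) (face (S k) (S i))) /\
  (forall n i : nat, i <= n ->
     is_pullback (fun x : X n => x) (fun x => degen (S n) (S i) (degen n i x))
                 (degen n i) (face (S n) (S i))).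

Fixpoint Tn (T : Monad) (k : nat) (X : Type) : Type :=
  match k with
  | 0 => X
  | S k' => T (Tn T k' X)
  end.

Definition BarX (T : Monad) (A : Type) (n : nat) : Type := Tn T (S n) A.

(** bar_face T e m i : T^{m+2} A -> T^{m+1} A is d_{m+1,i}, where
    d_{n,0} = T^n e and d_{n,i} = T^{n-i} mu_{T^{i-1} A} (1 <= i <= n),
    computed via T^{k+1} f = T (T^k f). *)
Fixpoint bar_face (T : Monad) (A : Type) (e : T A -> A) (m : nat) (i : nat)
  {struct m} : Tn T (S (S m)) A -> Tn T (S m) A :=
  match m return Tn T (S (S m)) A -> Tn T (S m) A with
  | 0 => if Nat.eqb i 0 then fmap T e else @mu T A
  | S m' => if Nat.eqb i (S (S m')) then @mu T (Tn T (S m') A)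
            else fmap T (@bar_face T A e m' i)
  end.

(** bar_degen T A n i : T^{n+1} A -> T^{n+2} A is s_{n,i} = T^{n-i+1} eta_{T^i A}. *)
Fixpoint bar_degen (T : Monad) (A : Type) (n : nat) (i : nat)
  {struct n} : Tn T (S n) A -> Tn T (S (S n)) A :=
  match n return Tn T (S n) A -> Tn T (S (S n)) A with
  | 0 => fmap T (@eta T A)
  | S n' => if Nat.eqb i (S n') then fmap T (@eta T (Tn T (S n') A))
            else fmap T (bar_degen T A n' i)
  end.

From Stdlib Require Import Arith Lia FunctionalExtensionality.

(* Apart from the last one (mu, resp. T eta), every face and degeneracy of
   the bar construction is T applied to a map one dimension lower.  Hence, by
   induction on the dimension, each square in question is either T applied to
   a lower square of the same shape, or T applied to a naturality square of mu
   or eta; weak cartesianness makes both weak pullbacks.  The squares with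
   s_{i+1} s_i bottom out instead at (id, eta eta, eta, mu), a weak pullback
   precisely by strict positivity.  The split squares are even pullbacks since
   one leg is monic: the identity, or a degeneracy, which has a face as
   retraction by the unit law of the algebra. *)

Section WeakPullbacks.

Variables (P B C D : Type) (f : P -> B) (g : P -> C) (m : B -> D) (n : C -> D).

Lemma weak_pullback_sym :
  is_weak_pullback f g m n -> is_weak_pullback g f n m.
Proof.
  intros [Hcomm Hfill]; split.
  - intro a; symmetry; apply Hcomm.
  - intros c b Hcb.
    destruct (Hfill b c (eq_sym Hcb)) as [a [Ha1 Ha2]].
    exists a; auto.
Qed.

Lemma weak_pullback_ext (f' : P -> B) (g' : P -> C) (m' : B -> D) (n' : C -> D) :
  (forall a, f a = f' a) -> (forall a, g a = g' a) ->
  (forall b, m b = m' b) -> (forall c, n c = n' c) ->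
  is_weak_pullback f g m n -> is_weak_pullback f' g' m' n'.
Proof.
  intros Ef Eg Em En [Hcomm Hfill]; split.
  - intro a; rewrite <- Ef, <- Eg, <- Em, <- En; apply Hcomm.
  - intros b c Hbc; rewrite <- Em, <- En in Hbc.
    destruct (Hfill b c Hbc) as [a [Ha1 Ha2]].
    exists a; rewrite <- Ef, <- Eg; auto.
Qed.

Lemma weak_pullback_monic_pullback :
  is_weak_pullback f g m n ->
  (forall a a', f a = f a' -> g a = g a' -> a = a') ->
  is_pullback f g m n.
Proof.
  intros [Hcomm Hfill] Hmonic; split; [exact Hcomm|].
  intros b c Hbc; destruct (Hfill b c Hbc) as [a [Ha1 Ha2]].
  exists a; split; [auto|].
  intros a' [Hb Hc]; apply Hmonic; congruence.
Qed.

End WeakPullbacks.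

Lemma fmap_id_ext (T : Monad) (X : Type) (f : X -> X) (t : T X) :
  (forall x, f x = x) -> fmap T f t = t.
Proof.
  intro Hf; replace f with (fun x : X => x); [apply fmap_id|].
  apply functional_extensionality; intro; symmetry; auto.
Qed.

Lemma strictly_positive_weak_pullback (T : Monad) (X : Type) :
  strictly_positive T ->
  is_weak_pullback (fun x => x) (fun x : X => eta T (eta T x))
    (@eta T X) (@mu T X).
Proof.
  intro Hsp; split.
  - intro x; symmetry; apply mu_eta_l.
  - intros x tau Htau; exists x; split; [reflexivity|].
    symmetry; apply Hsp; auto.
Qed.

Section WeaklyCartesianMonad.

Variable T : Monad.
Hypothesis HT : weakly_cartesian T.

Lemma fmap_weak_pullback (P B C D : Type)
  (f : P -> B) (g : P -> C) (m : B -> D) (n : C -> D) :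
  is_weak_pullback f g m n ->
  is_weak_pullback (fmap T f) (fmap T g) (fmap T m) (fmap T n).
Proof. apply (proj1 HT). Qed.

Lemma fmap_weak_pullback_id_comp (X Y Z : Type)
  (g1 : Y -> Z) (g2 : X -> Y) (f : Z -> Y) :
  is_weak_pullback (fun x => x) (fun x => g1 (g2 x)) g2 f ->
  is_weak_pullback (fun t => t) (fun t => fmap T g1 (fmap T g2 t))
    (fmap T g2) (fmap T f).
Proof.
  intro H; apply fmap_weak_pullback in H.
  revert H; apply weak_pullback_ext; try reflexivity.
  - apply fmap_id.
  - intro; apply fmap_comp.
Qed.

Lemma eta_naturality_weak_pullback (X Y : Type) (h : X -> Y) :
  is_weak_pullback h (@eta T X) (@eta T Y) (fmap T h).
Proof. apply (proj1 (proj2 HT)). Qed.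

Lemma mu_naturality_weak_pullback (X Y : Type) (h : X -> Y) :
  is_weak_pullback (fmap T (fmap T h)) (@mu T X) (@mu T Y) (fmap T h).
Proof. apply (proj2 (proj2 HT)). Qed.

End WeaklyCartesianMonad.

Section BarConstruction.

Variables (T : Monad) (A : Type) (e : T A -> A).

Local Notation d := (@bar_face T A e).
Local Notation s := (@bar_degen T A).

Lemma bar_face_last k : d k (S k) = @mu T (Tn T k A).
Proof. destruct k; simpl; [|rewrite Nat.eqb_refl]; reflexivity. Qed.

Lemma bar_face_lift k i : i <> S (S k) -> d (S k) i = fmap T (d k i).
Proof. intro Hi; simpl; apply Nat.eqb_neq in Hi; rewrite Hi; reflexivity. Qed.

Lemma bar_face_fmap k i : i <= k -> exists h, d k i = fmap T h.
Proof.
  intro Hi; destruct k.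
  - replace i with 0 by lia; exists e; reflexivity.
  - rewrite bar_face_lift by lia; eexists; reflexivity.
Qed.

Lemma bar_degen_last k : s k k = fmap T (@eta T (Tn T k A)).
Proof. destruct k; simpl; [|rewrite Nat.eqb_refl]; reflexivity. Qed.

Lemma bar_degen_lift k i : i <> S k -> s (S k) i = fmap T (s k i).
Proof. intro Hi; simpl; apply Nat.eqb_neq in Hi; rewrite Hi; reflexivity. Qed.

Lemma bar_degen_fmap k i : exists h, s k i = fmap T h.
Proof.
  destruct k; simpl; [|destruct (Nat.eqb i (S k))]; eexists; reflexivity.
Qed.

Lemma bar_face_degen (He_unit : forall a, e (eta T a) = a) k i x :
  i <= k -> d k i (s k i x) = x.
Proof.
  revert i x; induction k as [|k IHk]; intros i x Hi.
  - replace i with 0 by lia; simpl.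
    rewrite <- fmap_comp; apply fmap_id_ext, He_unit.
  - destruct (Nat.eq_dec i (S k)) as [->|Hik].
    + rewrite bar_degen_last, bar_face_lift, bar_face_last by lia.
      rewrite <- fmap_comp; apply fmap_id_ext, mu_eta_l.
    + rewrite bar_degen_lift, bar_face_lift by lia.
      rewrite <- fmap_comp; apply fmap_id_ext; intro; apply IHk; lia.
Qed.

Lemma bar_degen_inj (He_unit : forall a, e (eta T a) = a) k i x y :
  i <= k -> s k i x = s k i y -> x = y.
Proof.
  intros Hik Hxy.
  rewrite <- (bar_face_degen He_unit k i x Hik), Hxy.
  apply bar_face_degen; assumption.
Qed.

Hypothesis HT : weakly_cartesian T.

Lemma bar_inner_weak_pullback_last k i : i <= k ->
  is_weak_pullback (d (S k) i) (d (S k) (S (S k))) (d k (S k)) (d k i).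
Proof.
  intro Hik; rewrite !bar_face_last, bar_face_lift by lia.
  destruct (bar_face_fmap k i Hik) as [h ->].
  apply mu_naturality_weak_pullback; exact HT.
Qed.

Lemma bar_inner_weak_pullback k i j : i + 1 < j -> j <= k + 2 ->
  is_weak_pullback (d (S k) i) (d (S k) j) (d k (j - 1)) (d k i).
Proof.
  revert i j; induction k as [|k IHk]; intros i j Hij Hjk.
  - replace j with 2 by lia; apply bar_inner_weak_pullback_last; lia.
  - destruct (Nat.eq_dec j (S (S (S k)))) as [->|Hj].
    + replace (S (S (S k)) - 1) with (S (S k)) by lia.
      apply bar_inner_weak_pullback_last; lia.
    + rewrite (bar_face_lift k (j - 1)), (bar_face_lift k i),
        (bar_face_lift (S k) i), (bar_face_lift (S k) j) by lia.
      apply fmap_weak_pullback; [exact HT|]; apply IHk; lia.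
Qed.

Lemma bar_face_degen_weak_pullback_lt_last k i : i <= k ->
  is_weak_pullback (d k i) (s (S k) (S k)) (s k k) (d (S k) i).
Proof.
  intro Hik; rewrite !bar_degen_last, bar_face_lift by lia.
  destruct (bar_face_fmap k i Hik) as [h ->].
  apply fmap_weak_pullback, eta_naturality_weak_pullback; exact HT.
Qed.

Lemma bar_face_degen_weak_pullback_lt k i j : i < j -> j <= S k ->
  is_weak_pullback (d k i) (s (S k) j) (s k (j - 1)) (d (S k) i).
Proof.
  revert i j; induction k as [|k IHk]; intros i j Hij Hjk.
  - replace j with 1 by lia; apply bar_face_degen_weak_pullback_lt_last; lia.
  - destruct (Nat.eq_dec j (S (S k))) as [->|Hj].
    + replace (S (S k) - 1) with (S k) by lia.
      apply bar_face_degen_weak_pullback_lt_last; lia.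
    + rewrite (bar_face_lift k i), (bar_degen_lift (S k) j),
        (bar_degen_lift k (j - 1)), (bar_face_lift (S k) i) by lia.
      apply fmap_weak_pullback; [exact HT|]; apply IHk; lia.
Qed.

Lemma bar_face_degen_weak_pullback_gt_last k j : j <= k ->
  is_weak_pullback (d k (S k)) (s (S k) j) (s k j) (d (S k) (S (S k))).
Proof.
  intro Hjk; rewrite !bar_face_last, bar_degen_lift by lia.
  destruct (bar_degen_fmap k j) as [h ->].
  apply weak_pullback_sym, mu_naturality_weak_pullback; exact HT.
Qed.

Lemma bar_face_degen_weak_pullback_gt k i j : j < i -> i <= S k ->
  is_weak_pullback (d k i) (s (S k) j) (s k j) (d (S k) (S i)).
Proof.
  revert i j; induction k as [|k IHk]; intros i j Hji Hik.
  - replace i with 1 by lia; apply bar_face_degen_weak_pullback_gt_last; lia.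
  - destruct (Nat.eq_dec i (S (S k))) as [->|Hi].
    + apply bar_face_degen_weak_pullback_gt_last; lia.
    + rewrite (bar_face_lift k i), (bar_degen_lift k j),
        (bar_degen_lift (S k) j), (bar_face_lift (S k) (S i)) by lia.
      apply fmap_weak_pullback; [exact HT|]; apply IHk; lia.
Qed.

Hypothesis Hsp : strictly_positive T.

Lemma bar_degen_degen_weak_pullback_last k :
  is_weak_pullback (fun x => x) (fun x => s (S k) (S k) (s k k x))
    (s k k) (d (S k) (S k)).
Proof.
  rewrite !bar_degen_last, bar_face_lift, bar_face_last by lia.
  apply fmap_weak_pullback_id_comp, strictly_positive_weak_pullback; assumption.
Qed.

Lemma bar_degen_degen_weak_pullback k i : i <= k ->
  is_weak_pullback (fun x => x) (fun x => s (S k) (S i) (s k i x))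
    (s k i) (d (S k) (S i)).
Proof.
  revert i; induction k as [|k IHk]; intros i Hik.
  - replace i with 0 by lia; apply bar_degen_degen_weak_pullback_last.
  - destruct (Nat.eq_dec i (S k)) as [->|Hi].
    + apply bar_degen_degen_weak_pullback_last.
    + rewrite (bar_degen_lift k i), (bar_degen_lift (S k) (S i)),
        (bar_face_lift (S k) (S i)) by lia.
      apply fmap_weak_pullback_id_comp; [exact HT|]; apply IHk; lia.
Qed.

End BarConstruction.

Theorem proposition5p6 (T : Monad) (HT : weakly_cartesian T)
  (Hsp : strictly_positive T) (A : Type) (e : T A -> A)
  (He : @is_algebra T A e) :
  @inner_span_complete (BarX T A) (@bar_face T A e)
  /\ @split (BarX T A) (@bar_face T A e) (@bar_degen T A).
Proof.
  destruct He as [He_unit _].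
  split; [|split; [|split]].
  - intros k i j Hij Hjk; apply bar_inner_weak_pullback; assumption.
  - intros k i j Hij Hjk; apply weak_pullback_monic_pullback;
      [apply bar_face_degen_weak_pullback_lt; assumption|].
    intros a a' _; apply (bar_degen_inj T A e He_unit); lia.
  - intros k i j Hji Hik; apply weak_pullback_monic_pullback;
      [apply bar_face_degen_weak_pullback_gt; assumption|].
    intros a a' _; apply (bar_degen_inj T A e He_unit); lia.
  - intros k i Hik; apply weak_pullback_monic_pullback;
      [apply bar_degen_degen_weak_pullback; assumption|].
    intros a a' Haa' _; exact Haa'.
Qed.
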